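(* Let $X\in\mathcal A$, let $\vec\sigma$ be a preference profile and $w_X$ an $X$-truncated weight function for $\vec\sigma$. Then for every pseudometric $d$ consistent with $\vec\sigma$, $$\mathrm{SC}(X,d)\ge \frac12\sum_{Y\in\mathcal A}w_X^+(Y)\,d(X,Y).$$
   Context: Setting: $n$ agents $\mathcal N$, $m$ alternatives $\mathcal A$, each agent $i$ with a strict ranking; $X\succ_iY$ means $i$ ranks $X$ above $Y$, and $Y\succeq_iX$ means $Y\succ_iX$ or $Y=X$. A pseudometric $d$ on $\mathcal N\cup\mathcal A$ is consistent with $\vec\sigma$ if $X\succ_iY\Rightarrow d(i,X)\le d(i,Y)$; $\mathrm{SC}(X,d)=\sum_{i}d(i,X)$. An $X$-truncated weight function is $w:\mathcal N\times\mathcal A\to[0,1]$ such that for every agent $i$: $w(i,Y)=0$ whenever $X\succ_iY$, and $\sum_{Y:\,Y\succeq_iX}w(i,Y)=1$. Write $w^+(Y)=\sum_{i\in\mathcal N}w(i,Y)$. *)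

From mathcomp Require Import all_boot all_order all_algebra.
Set Implicit Arguments. Unset Strict Implicit. Unset Printing Implicit Defensive.
Import Order.TTheory GRing.Theory Num.Theory.
Local Open Scope ring_scope.

(* Agents [Ag] and alternatives [Al] are finite types; a profile gives, for
   each agent i, a strict relation [sigma i X Y] meaning "X ≻_i Y". *)

Definition strict_ranking (Al : finType) (r : rel Al) : Prop :=
  [/\ irreflexive r, transitive r & forall X Y, X != Y -> r X Y || r Y X].

Definition profile (Ag Al : finType) (sigma : Ag -> rel Al) : Prop :=
  forall i, strict_ranking (sigma i).

Definition pt (Ag Al : finType) := (Ag + Al)%type.

Definition pseudometric (R : realFieldType) (T : Type) (d : T -> T -> R) : Prop :=
  [/\ forall x, d x x = 0,
      forall x y, 0 <= d x y,
      forall x y, d x y = d y x &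
      forall x y z, d x z <= d x y + d y z].

Definition consistent (R : realFieldType) (Ag Al : finType)
  (sigma : Ag -> rel Al) (d : pt Ag Al -> pt Ag Al -> R) : Prop :=
  forall i X Y, sigma i X Y -> d (inl i) (inr X) <= d (inl i) (inr Y).

Definition SC (R : realFieldType) (Ag Al : finType)
  (d : pt Ag Al -> pt Ag Al -> R) (X : Al) : R :=
  \sum_(i : Ag) d (inl i) (inr X).

Definition truncated_weight (R : realFieldType) (Ag Al : finType)
  (sigma : Ag -> rel Al) (X : Al) (w : Ag -> Al -> R) : Prop :=
  [/\ forall i Y, 0 <= w i Y <= 1,
      forall i Y, sigma i X Y -> w i Y = 0 &
      forall i, \sum_(Y : Al | sigma i Y X || (Y == X)) w i Y = 1].

Definition wplus (R : realFieldType) (Ag Al : finType) (w : Ag -> Al -> R) (Y : Al) : R :=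
  \sum_(i : Ag) w i Y.

From mathcomp Require Import all_boot all_order all_algebra.
Import Order.TTheory GRing.Theory Num.Theory.
Local Open Scope ring_scope.

(* Fix an agent i. Every Y that i ranks weakly above X satisfies
   d(i,Y) <= d(i,X), so d(X,Y) <= d(X,i) + d(i,Y) <= 2 d(i,X); since the
   weights w(i,.) form a probability vector on these Y, agent i contributes
   at most 2 d(i,X) to the right-hand side. Summing over agents gives 2 SC(X,d). *)

Lemma pseudometric_le_double (R : realFieldType) (T : Type) (d : T -> T -> R)
    (x y z : T) :
  pseudometric d -> d z y <= d z x -> d x y <= 2 * d z x.
Proof.
case=> _ _ dsym dtri dzy_le.
apply: le_trans (dtri x z y) _.
by rewrite dsym mulr2n mulrDl mul1r lerD2l.
Qed.

Lemma convex_comb_le (R : realFieldType) (I : finType) (P : pred I)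
    (w f : I -> R) (c : R) :
  (forall i, 0 <= w i) -> (forall i, ~~ P i -> w i = 0) ->
  \sum_(i | P i) w i = 1 -> (forall i, P i -> f i <= c) ->
  \sum_i w i * f i <= c.
Proof.
move=> w_ge0 w_out w_sum1 f_le.
rewrite (bigID P) /= [X in _ + X]big1 ?addr0 => [|i /w_out ->]; last by rewrite mul0r.
rewrite -[leRHS]mul1r -w_sum1 mulr_suml.
by apply: ler_sum => i Pi; rewrite ler_wpM2l ?f_le.
Qed.

Lemma truncated_weight_out (R : realFieldType) (Ag Al : finType)
    (sigma : Ag -> rel Al) (X : Al) (w : Ag -> Al -> R) (i : Ag) (Y : Al) :
  profile sigma -> truncated_weight sigma X w ->
  ~~ (sigma i Y X || (Y == X)) -> w i Y = 0.
Proof.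
move=> prof [_ w_below _]; rewrite negb_or => /andP[nYX nYeqX].
apply: w_below; case: (prof i) => _ _ total.
by move: (total X Y); rewrite eq_sym nYeqX (negbTE nYX) orbF; apply.
Qed.

Lemma agent_weighted_dist_le (R : realFieldType) (Ag Al : finType)
    (sigma : Ag -> rel Al) (X : Al) (w : Ag -> Al -> R)
    (d : pt Ag Al -> pt Ag Al -> R) (i : Ag) :
  profile sigma -> truncated_weight sigma X w ->
  pseudometric d -> consistent sigma d ->
  \sum_(Y : Al) w i Y * d (inr X) (inr Y) <= 2 * d (inl i) (inr X).
Proof.
move=> prof wX dpm dcons.
have [w_01 _ w_sum1] := wX.
apply: (@convex_comb_le _ _ (fun Y => sigma i Y X || (Y == X))) => //.
- by move=> Y; case/andP: (w_01 i Y).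
- by move=> Y; apply: truncated_weight_out.
move=> Y above; apply: pseudometric_le_double => //.
by case/orP: above => [/dcons //|/eqP ->].
Qed.

Theorem mainTheorem5 (R : realFieldType) (Ag Al : finType)
  (sigma : Ag -> rel Al) (X : Al) (w : Ag -> Al -> R)
  (d : pt Ag Al -> pt Ag Al -> R) :
  profile sigma ->
  truncated_weight sigma X w ->
  pseudometric d ->
  consistent sigma d ->
  SC d X >= 2^-1 * \sum_(Y : Al) wplus w Y * d (inr X) (inr Y).
Proof.
move=> prof wX dpm dcons.
rewrite ler_pdivrMl ?ltr0n // /SC /wplus mulr_sumr.
under eq_bigr => Y _ do rewrite mulr_suml.
rewrite exchange_big /=.
by apply: ler_sum => i _; apply: agent_weighted_dist_le.
Qed.
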